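(* For every positive integer $d$, the following identity holds in $K[t,z]$: \[\sum_{a\in A(d)}\chi_t(a)\,\frac{\ell_d E_d(z-a)}{z-a}=\sum_{j=0}^{d-1}b_j(t)E_j(z).\]
   Context: $A=\mathbb{F}_q[\theta]$, $K=\mathbb{F}_q(\theta)$; $\chi_t:A\to\mathbb{F}_q[t]$ the $\mathbb{F}_q$-algebra map with $\theta\mapsto t$. $b_j(t)=\prod_{i=0}^{j-1}(t-\theta^{q^i})$; $\ell_d=\prod_{j=1}^{d}(\theta-\theta^{q^j})$. $D_j$ is the product of all monic polynomials of degree $j$ in $A$. $A(d)$ is the set of elements of $A$ of degree $<d$ ($A(0)=\{0\}$), and $E_d(z)=D_d^{-1}\prod_{a\in A(d)}(z-a)$; note $E_d(z-a)/(z-a)$ is a polynomial in $z$ for $a\in A(d)$. *)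

(* A = {poly F}, K = {fraction {poly F}}, F a finite field, q = #|F|.
   K[t,z] is represented as {poly {poly K}}: outer variable z, inner variable t. *)
From HB Require Import structures.
From mathcomp Require Import all_boot all_order all_algebra.
Set Implicit Arguments. Unset Strict Implicit. Unset Printing Implicit Defensive.
Import GRing.Theory.
Local Open Scope ring_scope.

Notation Kfrac F := {fraction {poly F}}.

Definition iA (F : finFieldType) (a : {poly F}) : Kfrac F := FracField.tofrac a.

(* A(d): the elements of A of degree < d (i.e. size <= d), enumerated without
   repetition as Poly s for coefficient tuples s : d.-tuple F. A(0) = [:: 0]. *)
Definition Adeg (F : finFieldType) (d : nat) : seq {poly F} :=
  [seq Poly (tval s) | s : d.-tuple F].

Definition Dprod (F : finFieldType) (j : nat) : {poly F} :=
  \prod_(s : j.-tuple F) ('X^j + Poly (tval s)).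

Definition Ecarlitz (F : finFieldType) (d : nat) : {poly Kfrac F} :=
  (iA (Dprod F d))^-1 *: \prod_(a <- Adeg F d) ('X - (iA a)%:P).

Definition ell (F : finFieldType) (d : nat) : {poly F} :=
  \prod_(1 <= j < d.+1) ('X - 'X^(#|F| ^ j)).

Definition bpoly (F : finFieldType) (j : nat) : {poly Kfrac F} :=
  \prod_(i < j) ('X - (iA ('X^(#|F| ^ i)))%:P).

(* chi_t : A -> F_q[t] subset K[t], theta |-> t *)
Definition chi_t (F : finFieldType) (a : {poly F}) : {poly Kfrac F} :=
  map_poly (fun c : F => iA c%:P) a.

Definition liftz (F : finFieldType) (p : {poly Kfrac F}) : {poly {poly Kfrac F}} :=
  map_poly polyC p.

From HB Require Import structures.
From mathcomp Require Import all_boot all_order all_algebra all_field.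
Import GRing.Theory.
Set Implicit Arguments. Unset Strict Implicit.
Local Open Scope ring_scope.

(* Write theta for the generator of A = F_q[theta] in K and e_n for the
   vanishing polynomial prod_(a in A(n)) (X - a) of A(n), so E_n = D_n^-1 e_n.
   1. Splitting A(n+1) = F_q + theta A(n) expresses e_(n+1) through e_n, and
      shows by induction that x |-> E_n(x) is F_q-linear on K.
   2. E_n vanishes on A(n) and E_n(theta^n) = 1.  An F_q-linear map on A(j) is
      determined by its values at theta^i (i < j), so root counting gives the
      functional equation E_(n+1)(theta z) = theta^(q^(n+1)) E_(n+1)(z) + E_n(z);
      its linear coefficient gives ell_n E_n'(0) = 1.
   3. Interpolation: S_d(x) = sum_(j<d) b_j(t) E_j(x) satisfies
      S_(d+1)(theta x) = t S_(d+1)(x) when E_d(x) = 0 (the sum telescopes), so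
      S_d(theta^i) = t^i for i < d and, by linearity, S_d(a) = chi_t(a) on A(d).
   4. With E_d = z Q_d the left-hand side is sum_a chi_t(a) ell_d Q_d(z - a).
      Both sides have degree < q^d in z and equal chi_t(a0) at each z = a0 of
      A(d): on the left only a = a0 contributes, as Q_d vanishes on
      A(d) \ {0} and ell_d Q_d(0) = 1.  Hence they coincide (this last
      argument works for d = 0 as well). *)

Lemma poly_eq_on_points (R : idomainType) (p r : {poly R}) (s : seq R) :
  uniq s -> (size (p - r)%R <= size s)%N -> {in s, forall x, p.[x] = r.[x]} ->
  p = r.
Proof.
move=> uniq_s size_pr eq_pr; apply/eqP; rewrite -subr_eq0; apply/eqP.
apply: roots_geq_poly_eq0 uniq_s size_pr; apply/allP => x xs.
by rewrite /root !hornerE eq_pr // subrr.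
Qed.

Lemma size_sum_leq (R : nzSemiRingType) I (r : seq I) (P : pred I)
    (G : I -> {poly R}) n :
  (forall i, P i -> (size (G i) <= n)%N) ->
  (size (\sum_(i <- r | P i) G i)%R <= n)%N.
Proof.
move=> sizeG; elim/big_rec: _ => [|i p Pi size_p]; first by rewrite size_poly0.
by rewrite (leq_trans (size_polyD _ _)) // geq_max sizeG.
Qed.

Lemma size_sub_leq (R : nzRingType) (p r : {poly R}) n :
  (size p <= n)%N -> (size r <= n)%N -> (size (p - r)%R <= n)%N.
Proof.
by move=> sp sr; rewrite (leq_trans (size_polyD _ _)) // geq_max size_polyN sp.
Qed.

Lemma prodr_const_seq (R : pzSemiRingType) I (r : seq I) (x : R) :
  \prod_(i <- r) x = x ^+ size r.
Proof. by rewrite big_const_seq count_predT -Monoid.iteropE. Qed.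

Lemma coef_comp_scaleX (R : comNzRingType) (c : R) (p : {poly R}) i :
  (p \Po (c *: 'X))`_i = p`_i * c ^+ i.
Proof.
rewrite coef_comp_poly; under eq_bigr do rewrite exprZn coefZ coefXn.
have [lt_ip|le_pi] := ltnP i (size p).
  rewrite (bigD1 (Ordinal lt_ip)) //= eqxx mulr1 big1 ?addr0 // => k.
  by rewrite -val_eqE /= eq_sym => /negbTE ->; rewrite !mulr0.
rewrite big1 => [|k _]; first by rewrite (leq_sizeP _ _ le_pi) ?mul0r.
by rewrite gtn_eqF ?(leq_trans (ltn_ord k)) ?mulr0.
Qed.

Section CarlitzPolynomials.
Variable F : finFieldType.
Local Notation K := {fraction {poly F}}.
Local Notation q := #|F|.

HB.instance Definition _ := GRing.RMorphism.copy (@iA F) (@tofrac _).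

Definition iF : {rmorphism F -> K} := (@tofrac _ \o polyC)%FUN.
Definition theta : K := iA 'X.

Lemma iAC (c : F) : iA c%:P = iF c. Proof. by []. Qed.
Lemma iAXn n : iA 'X^n = theta ^+ n. Proof. by rewrite rmorphXn. Qed.
Lemma iA_eq0 (a : {poly F}) : (iA a == 0) = (a == 0).
Proof. exact: tofrac_eq0. Qed.
Lemma iA_inj : injective (@iA F).
Proof. by move=> a b /eqP; rewrite tofrac_eq => /eqP. Qed.
Lemma theta_neq0 : theta != 0. Proof. by rewrite iA_eq0 polyX_eq0. Qed.
Lemma q_gt1 : (1 < q)%N. Proof. exact: finNzRing_gt1. Qed.

Lemma iA_expand (a : {poly F}) : iA a = \sum_(i < size a) iF a`_i * theta ^+ i.
Proof.
rewrite -{1}(coefK a) poly_def rmorph_sum; apply: eq_bigr => i _.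
by rewrite -mul_polyC rmorphM /= iAXn.
Qed.

Lemma frobeniusD (x y : K) : (x + y) ^+ q = x ^+ q + y ^+ q.
Proof.
have [p p_pr charFp] := finPcharP F.
have -> : q = (p ^ logn p #|pPrimeCharType charFp|)%N := card_pprimeChar charFp.
by apply: exprDn_pchar; rewrite pnatX pnatE // (rmorph_pchar iF charFp).
Qed.

Lemma iF_frobenius (c : F) : iF c ^+ q = iF c.
Proof. by rewrite -rmorphXn expf_card. Qed.

Lemma mem_Adeg n (a : {poly F}) : (a \in Adeg F n) = (size a <= n)%N.
Proof.
apply/idP/idP.
  by case/mapP=> s _ ->; apply: leq_trans (size_Poly _) _; rewrite size_tuple.
move=> size_a; apply/mapP; exists [tuple a`_i | i < n]; first by rewrite mem_enum.
apply/polyP=> i; rewrite coef_Poly.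
have [lt_in|le_ni] := ltnP i n.
  by rewrite -[i]/(nat_of_ord (Ordinal lt_in)) -tnth_nth tnth_mktuple.
by move/leq_sizeP: size_a => ->; rewrite // nth_default ?size_tuple.
Qed.

Lemma uniq_Adeg n : uniq (Adeg F n).
Proof.
rewrite map_inj_uniq ?enum_uniq // => s t eq_st.
apply/val_inj/(@eq_from_nth _ 0); first by rewrite !size_tuple.
by move=> i _; have := congr1 (fun p : {poly F} => p`_i) eq_st; rewrite !coef_Poly.
Qed.

Lemma size_Adeg n : size (Adeg F n) = (q ^ n)%N.
Proof. by rewrite size_map -cardE card_tuple. Qed.

Lemma Adeg0 : Adeg F 0 = [:: 0].
Proof.
have := size_Adeg 0; have := mem_Adeg 0.
case: (Adeg F 0) => [|a [|]] //= mem_a _; congr [:: _]; apply/eqP.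
by rewrite -size_poly_eq0 -leqn0 -mem_a inE eqxx.
Qed.

Lemma perm_Adeg_opp n : perm_eq (map -%R (Adeg F n)) (Adeg F n).
Proof.
apply: uniq_perm; rewrite ?(map_inj_uniq oppr_inj) ?uniq_Adeg // => x.
by rewrite -{1}(opprK x) (mem_map oppr_inj) !mem_Adeg size_polyN.
Qed.

Lemma Adeg_S n :
  perm_eq (Adeg F n.+1) [seq c%:P + 'X * b | c <- enum F, b <- Adeg F n].
Proof.
apply: uniq_perm; first exact: uniq_Adeg.
  rewrite allpairs_uniq ?enum_uniq ?uniq_Adeg // => -[c b] [c' b'] _ _ /= eq_cb.
  have eq_c : c = c'.
    have := congr1 (fun p : {poly F} => p`_0) eq_cb.
    by rewrite !coefD !coefC !coefXM !addr0.
  by move: eq_cb; rewrite eq_c => /addrI /mulfI ->; rewrite ?polyX_eq0.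
move=> a; rewrite mem_Adeg; apply/idP/allpairsP.
  move=> size_a; exists (a`_0, \poly_(i < n) a`_i.+1).
  rewrite mem_enum mem_Adeg size_poly; split=> //=.
  apply/polyP=> -[|i]; rewrite coefD coefC coefXM /= ?addr0 // add0r coef_poly.
  by case: ltnP => // le_ni; move/leq_sizeP: size_a => ->.
move=> [[c b] [_ /= size_b ->]]; rewrite mem_Adeg in size_b.
rewrite (leq_trans (size_polyD _ _)) // geq_max size_polyC (leq_trans (leq_b1 _)) //.
have [->|b_neq0] := eqVneq b 0; first by rewrite mulr0 size_poly0.
by rewrite mulrC size_mulX.
Qed.

Definition Fq_linear (f : K -> K) :=
  {morph f : x y / x + y} /\ forall c x, f (iF c * x) = iF c * f x.

Lemma Fq_linear_expand f : Fq_linear f ->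
  forall a : {poly F}, f (iA a) = \sum_(i < size a) iF a`_i * f (theta ^+ i).
Proof.
move=> [fD fZ] a; have f0 : f 0 = 0 by have := fZ 0 0; rewrite rmorph0 !mul0r.
rewrite iA_expand (big_morph f fD f0); apply: eq_bigr => i _; exact: fZ.
Qed.

Lemma Fq_linear_eq f g j : Fq_linear f -> Fq_linear g ->
    (forall i, (i < j)%N -> f (theta ^+ i) = g (theta ^+ i)) ->
  forall a : {poly F}, (size a <= j)%N -> f (iA a) = g (iA a).
Proof.
move=> lin_f lin_g eq_fg a size_a; rewrite !Fq_linear_expand //.
by apply: eq_bigr => i _; rewrite eq_fg // (leq_trans (ltn_ord i)).
Qed.

Lemma eq_Fq_linear f g : f =1 g -> Fq_linear g -> Fq_linear f.
Proof. by move=> eq_fg [gD gZ]; split=> [x y|c x]; rewrite !eq_fg ?gD ?gZ. Qed.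

Lemma Fq_linear_add f g : Fq_linear f -> Fq_linear g -> Fq_linear (fun x => f x + g x).
Proof.
move=> [fD fZ] [gD gZ]; split=> [x y|c x]; first by rewrite fD gD addrACA.
by rewrite fZ gZ mulrDr.
Qed.

Lemma Fq_linear_scale k f : Fq_linear f -> Fq_linear (fun x => k * f x).
Proof. by move=> [fD fZ]; split=> [x y|c x]; rewrite ?fD ?mulrDr // fZ mulrCA. Qed.

Lemma Fq_linear_dilate k f : Fq_linear f -> Fq_linear (fun x => f (k * x)).
Proof. by move=> [fD fZ]; split=> [x y|c x]; rewrite ?mulrDr ?fD // mulrCA fZ. Qed.

Lemma Fq_linear_frobenius k f : Fq_linear f -> Fq_linear (fun x => f x ^+ q - k * f x).
Proof.
move=> [fD fZ]; split=> [x y|c x]; first by rewrite fD frobeniusD mulrDr opprD addrACA.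
by rewrite fZ exprMn iF_frobenius mulrBr mulrCA.
Qed.

Lemma prod_sub_Fmul (L : fieldType) (f : {rmorphism F -> L}) (x y : L) :
  \prod_(c <- enum F) (x - f c * y) = x ^+ q - y ^+ q.-1 * x.
Proof.
have prod_const (w : L) : \prod_(c <- enum F) w = w ^+ q.
  by rewrite prodr_const_seq -cardE.
have [->|y_neq0] := eqVneq y 0.
  under eq_bigr do rewrite mulr0 subr0.
  by rewrite prod_const expr0n -subn1 subn_eq0 leqNgt q_gt1 mul0r subr0.
have genF (w : L) : \prod_(c <- enum F) (w - f c) = w ^+ q - w.
  transitivity ((map_poly f ('X^q - 'X)).[w]); last first.
    by rewrite rmorphB /= map_polyXn map_polyX !hornerE.
  rewrite finField_genPoly rmorph_prod horner_prod big_enum /=.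
  by apply: eq_bigr => c _; rewrite map_polyXsubC hornerXsubC.
transitivity (\prod_(c <- enum F) (y * (x / y - f c))).
  by apply: eq_bigr => c _; rewrite mulrBr mulrCA divff // mulr1 mulrC.
rewrite big_split /= prod_const genF mulrBr expr_div_n.
congr (_ - _); first by rewrite mulrCA divff ?expf_neq0 // mulr1.
by rewrite -{1}(prednK (ltnW q_gt1)) exprS mulrAC mulrCA divff // mulr1 mulrC.
Qed.

Definition eprod n : {poly K} := \prod_(a <- Adeg F n) ('X - (iA a)%:P).

Lemma eprod_eval n x : (eprod n).[x] = \prod_(a <- Adeg F n) (x - iA a).
Proof. by rewrite horner_prod; apply: eq_bigr => a _; rewrite hornerXsubC. Qed.

(* Substituting A(n+1) = F + theta A(n) into the product defining e_(n+1). *)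
Lemma eprod_S_eval n x : Fq_linear (horner (eprod n)) ->
  (eprod n.+1).[x] = (theta ^+ (q ^ n)) ^+ q *
    ((eprod n).[theta^-1 * x] ^+ q -
     (eprod n).[theta^-1] ^+ q.-1 * (eprod n).[theta^-1 * x]).
Proof.
move=> [eD eZ]; rewrite eprod_eval (perm_big _ (Adeg_S n)) big_allpairs_dep /=.
have -> : (theta ^+ (q ^ n)) ^+ q = \prod_(c <- enum F) theta ^+ (q ^ n).
  by rewrite prodr_const_seq -cardE.
rewrite -(prod_sub_Fmul iF) -big_split /=; apply: eq_bigr => c _.
rewrite -mulNr -(rmorphN iF) -eZ -eD eprod_eval -(size_Adeg n) -prodr_const_seq.
rewrite -big_split /=; apply: eq_bigr => b _.
rewrite rmorphD rmorphM /= iAC -[tofrac _]/(iF (- c)) rmorphN -/theta.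
rewrite mulrBr mulrDr mulrA mulfV ?theta_neq0 // mul1r mulNr mulrN mulrCA.
by rewrite mulfV ?theta_neq0 // mulr1 opprD addrA.
Qed.

Lemma eprod_linear n : Fq_linear (horner (eprod n)).
Proof.
elim: n => [|n IH].
  apply: (@eq_Fq_linear _ id) => [x|]; last by split.
  by rewrite eprod_eval Adeg0 big_seq1 rmorph0 subr0.
have lin_dilate := Fq_linear_dilate theta^-1 IH.
have := Fq_linear_scale (theta ^+ (q ^ n) ^+ q)
  (Fq_linear_frobenius ((eprod n).[theta^-1] ^+ q.-1) lin_dilate).
by apply: eq_Fq_linear => x; rewrite eprod_S_eval.
Qed.

Lemma Ecarlitz_eval n x :
  (Ecarlitz F n).[x] = (iA (Dprod F n))^-1 * (eprod n).[x].
Proof. exact: hornerZ. Qed.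

Lemma Ecarlitz_linear n : Fq_linear (horner (Ecarlitz F n)).
Proof. exact/(eq_Fq_linear (Ecarlitz_eval n))/Fq_linear_scale/eprod_linear. Qed.

Lemma Dprod_Adeg n : Dprod F n = \prod_(a <- Adeg F n) ('X^n + a).
Proof. by rewrite /Dprod /Adeg big_map big_enum. Qed.

Lemma Dprod_neq0 n : Dprod F n != 0.
Proof.
rewrite Dprod_Adeg prodf_seq_neq0; apply/allP => a; rewrite mem_Adeg => size_a /=.
by rewrite -size_poly_eq0 size_polyDl ?size_polyXn.
Qed.

Lemma iA_Dprod n : iA (Dprod F n) = (eprod n).[theta ^+ n].
Proof.
rewrite eprod_eval Dprod_Adeg rmorph_prod -(perm_big _ (perm_Adeg_opp n)) big_map.
by apply: eq_bigr => a _; rewrite rmorphD rmorphN rmorphXn.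
Qed.

Lemma Ecarlitz_theta_n n : (Ecarlitz F n).[theta ^+ n] = 1.
Proof. by rewrite Ecarlitz_eval -iA_Dprod mulVf // iA_eq0 Dprod_neq0. Qed.

Lemma Ecarlitz_root n (a : {poly F}) : (size a <= n)%N -> (Ecarlitz F n).[iA a] = 0.
Proof.
move=> size_a; rewrite Ecarlitz_eval eprod_eval; apply/eqP.
rewrite mulf_eq0 prodf_seq_eq0; apply/orP; right; apply/hasP.
by exists a; rewrite ?mem_Adeg // subrr eqxx.
Qed.

Lemma Ecarlitz_root_theta n i : (i < n)%N -> (Ecarlitz F n).[theta ^+ i] = 0.
Proof. by move=> lt_in; rewrite -iAXn Ecarlitz_root ?size_polyXn. Qed.

Lemma size_Ecarlitz n : size (Ecarlitz F n) = (q ^ n).+1.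
Proof.
rewrite size_scale ?invr_eq0 ?iA_eq0 ?Dprod_neq0 //.
by rewrite size_prod_XsubC size_Adeg.
Qed.

Lemma Ecarlitz0 : Ecarlitz F 0 = 'X.
Proof.
rewrite /Ecarlitz Dprod_Adeg Adeg0 !big_seq1 expr0 addr0 rmorph1 invr1 scale1r.
by rewrite rmorph0 subr0.
Qed.

(* The functional equation E_(n+1)(theta z) = theta^(q^(n+1)) E_(n+1)(z) + E_n(z):
   both sides are F-linear in z and agree at theta^i for i <= n, so they agree
   on A(n+1); their difference has degree < q^(n+1) = #|A(n+1)|. *)
Lemma Ecarlitz_dilate n : Ecarlitz F n.+1 \Po (theta *: 'X) =
  theta ^+ (q ^ n.+1) *: Ecarlitz F n.+1 + Ecarlitz F n.
Proof.
set E := Ecarlitz F n.+1; set E' := Ecarlitz F n; set N := (q ^ n.+1)%N.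
have size_E' : (size E' <= N)%N by rewrite size_Ecarlitz ltn_exp2l ?q_gt1.
apply: (@poly_eq_on_points _ _ _ (map (@iA F) (Adeg F n.+1))).
- by rewrite (map_inj_uniq iA_inj) uniq_Adeg.
- rewrite size_map size_Adeg -/N.
  have size_diff : (size (E \Po (theta *: 'X) - (theta ^+ N *: E + E'))%R <= N.+1)%N.
    apply: size_sub_leq.
      by rewrite size_comp_poly2 ?size_Ecarlitz // size_scale ?theta_neq0 ?size_polyX.
    rewrite (leq_trans (size_polyD _ _)) // geq_max (leqW size_E') andbT.
    by rewrite (leq_trans (size_scale_leq _ _)) // size_Ecarlitz.
  apply/leq_sizeP => i; rewrite leq_eqVlt => /orP[/eqP <-|]; last first.
    exact: (leq_sizeP _ _ size_diff).
  rewrite coefB coefD coef_comp_scaleX (coefZ (theta ^+ N)).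
  by rewrite (leq_sizeP _ _ size_E') // addr0 mulrC subrr.
move=> _ /mapP[a a_in ->]; rewrite mem_Adeg in a_in.
rewrite horner_comp (hornerZ theta) hornerX hornerD (hornerZ (theta ^+ N)).
apply: (@Fq_linear_eq (fun x => E.[theta * x])
                      (fun x => theta ^+ N * E.[x] + E'.[x]) n.+1) a_in.
- exact/Fq_linear_dilate/Ecarlitz_linear.
- exact/Fq_linear_add/Ecarlitz_linear/Fq_linear_scale/Ecarlitz_linear.
move=> i; rewrite ltnS leq_eqVlt => /orP[/eqP ->|lt_in].
  by rewrite -exprS !Ecarlitz_theta_n Ecarlitz_root_theta // mulr0 add0r.
by rewrite -exprS !Ecarlitz_root_theta ?mulr0 ?add0r // ltnW.
Qed.

(* Comparing linear coefficients in the functional equation: ell_n E_n'(0) = 1. *)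
Lemma ell_Ecarlitz_coef1 n : iA (ell F n) * (Ecarlitz F n)`_1 = 1.
Proof.
elim: n => [|n IH]; first by rewrite /ell big_geq // rmorph1 Ecarlitz0 coefX mul1r.
have := congr1 (fun p : {poly K} => p`_1) (Ecarlitz_dilate n).
rewrite /= coef_comp_scaleX coefD (coefZ (theta ^+ _)) expr1 => coef1.
rewrite /ell big_nat_recr //= -/(ell F n) rmorphM rmorphB /= iAXn -/theta -mulrA mulrBl.
by rewrite [theta * _]mulrC coef1 addrAC subrr add0r.
Qed.

Lemma Ecarlitz_dilate_eval n x : (Ecarlitz F n).[theta * x] =
  theta ^+ (q ^ n) * (Ecarlitz F n).[x] +
  (if n is m.+1 then (Ecarlitz F m).[x] else 0).
Proof.
case: n => [|n]; first by rewrite Ecarlitz0 !hornerX expn0 expr1 addr0.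
have := congr1 (horner^~ x) (Ecarlitz_dilate n).
by rewrite /= horner_comp (hornerZ theta) hornerX hornerD (hornerZ (theta ^+ _)).
Qed.

Lemma bpoly0 : bpoly F 0 = 1.
Proof. by rewrite /bpoly big_ord0. Qed.

Lemma bpolyS j : bpoly F j.+1 = bpoly F j * ('X - (theta ^+ (q ^ j))%:P).
Proof. by rewrite /bpoly big_ord_recr /= iAXn. Qed.

Definition interp d x : {poly K} :=
  \sum_(j < d) bpoly F j * ((Ecarlitz F j).[x])%:P.

(* One term of S_d(theta x), rewritten with the functional equation and
   b_(j+1) = b_j (t - theta^(q^j)); the sum over j telescopes. *)
Lemma interp_term_dilate j x :
  bpoly F j * ((Ecarlitz F j).[theta * x])%:P =
  'X * (bpoly F j * ((Ecarlitz F j).[x])%:P) -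
  bpoly F j.+1 * ((Ecarlitz F j).[x])%:P +
  (if j is m.+1 then bpoly F j * ((Ecarlitz F m).[x])%:P else 0).
Proof.
rewrite Ecarlitz_dilate_eval polyCD polyCM mulrDr bpolyS.
apply: (congr2 +%R); last by case: j => [|m]; [rewrite polyC0 mulr0 | ].
move: (bpoly F j) ((Ecarlitz F j).[x])%:P (theta ^+ _)%:P => b e c.
by rewrite mulrBr mulrBl opprB addrCA [b * 'X]mulrC -(mulrA 'X) subrr addr0 mulrA.
Qed.

Lemma interp_dilate d x :
  (Ecarlitz F d).[x] = 0 -> interp d.+1 (theta * x) = 'X * interp d.+1 x.
Proof.
move=> Edx0; rewrite /interp mulr_sumr.
under eq_bigr do rewrite interp_term_dilate.
rewrite !big_split /= sumrN [X in _ - X]big_ord_recr [X in _ + X]big_ord_recl /=.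
by rewrite Edx0 polyC0 mulr0 addr0 add0r subrK.
Qed.

Lemma interp_theta_pow d i : (i < d)%N -> interp d (theta ^+ i) = 'X^i.
Proof.
elim: i d => [|i IH] [|d] // lt_id.
  rewrite /interp big_ord_recl big1 => [|j _]; last first.
    by rewrite Ecarlitz_root_theta // polyC0 mulr0.
  by rewrite bpoly0 Ecarlitz0 hornerX polyC1 mulr1 addr0.
by rewrite exprS interp_dilate ?Ecarlitz_root_theta // IH -?exprS // ltnW.
Qed.

Lemma chi_t_expand (a : {poly F}) : chi_t a = \sum_(i < size a) iF a`_i *: 'X^i.
Proof. by rewrite /chi_t /map_poly poly_def. Qed.

(* Interpolation: S_d(a) = chi_t(a) for a in A(d), by F-linearity of each E_j. *)
Lemma interp_chi d (a : {poly F}) : (size a <= d)%N -> interp d (iA a) = chi_t a.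
Proof.
move=> size_a; rewrite chi_t_expand /interp.
under eq_bigr do rewrite (Fq_linear_expand (Ecarlitz_linear _)) rmorph_sum mulr_sumr.
rewrite exchange_big /=; apply: eq_bigr => i _.
rewrite -(interp_theta_pow (leq_trans (ltn_ord i) size_a)) scaler_sumr.
by apply: eq_bigr => j _; rewrite polyCM -mul_polyC mulrCA.
Qed.

Definition Ediv n : {poly K} := Ecarlitz F n %/ 'X.

Lemma EdivK n : Ediv n * 'X = Ecarlitz F n.
Proof.
apply: divpK; rewrite -['X]subr0 -polyC0 dvdp_XsubCl /root.
by rewrite -(rmorph0 (@iA F)) Ecarlitz_root ?size_poly0.
Qed.

Lemma size_Ediv n : size (Ediv n) = (q ^ n)%N.
Proof.
have := size_Ecarlitz n; rewrite -EdivK.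
have [->|Q_neq0] := eqVneq (Ediv n) 0; first by rewrite mul0r size_poly0.
by rewrite size_mulX // => -[].
Qed.

Lemma ell_Ediv0 n : iA (ell F n) * (Ediv n).[0] = 1.
Proof. by have := ell_Ecarlitz_coef1 n; rewrite -EdivK coefMX horner_coef0. Qed.

Lemma Ediv_root n (b : {poly F}) :
  (size b <= n)%N -> b != 0 -> (Ediv n).[iA b] = 0.
Proof.
move=> size_b b_neq0; have := Ecarlitz_root size_b.
rewrite -EdivK hornerM hornerX => /eqP; rewrite mulf_eq0 iA_eq0 (negbTE b_neq0).
by rewrite orbF => /eqP.
Qed.

Lemma comp_Ecarlitz_divp n x :
  (Ecarlitz F n \Po ('X - x%:P)) %/ ('X - x%:P) = Ediv n \Po ('X - x%:P).
Proof. by rewrite -EdivK comp_polyM comp_polyX mulpK ?polyXsubC_eq0. Qed.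

Lemma size_Cmul_liftz (c p : {poly K}) : (size (c%:P * liftz p)%R <= size p)%N.
Proof. by rewrite mul_polyC (leq_trans (size_scale_leq _ _)) ?size_map_polyC. Qed.

Lemma horner_Cmul_liftz (c p : {poly K}) x : (c%:P * liftz p).[x%:P] = c * (p.[x])%:P.
Proof. by rewrite hornerCM horner_map. Qed.

(* At z = a0 in A(d) the left-hand side reduces to its term a = a0, which is
   chi_t(a0) since ell_d Q_d(0) = 1 and Q_d(a0 - a) = 0 for a <> a0. *)
Lemma lhs_eval d (a0 : {poly F}) : (size a0 <= d)%N ->
  (\sum_(a <- Adeg F d) (chi_t a)%:P *
     liftz (iA (ell F d) *: (Ediv d \Po ('X - (iA a)%:P)))).[(iA a0)%:P] = chi_t a0.
Proof.
move=> size_a0; have a0_in : a0 \in Adeg F d by rewrite mem_Adeg.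
rewrite horner_sum (bigD1_seq a0 a0_in (uniq_Adeg d)) /=.
rewrite big1_seq => [|a /andP[a_neq_a0 a_in]].
  rewrite horner_Cmul_liftz hornerZ horner_comp hornerXsubC subrr ell_Ediv0.
  by rewrite polyC1 mulr1 addr0.
rewrite horner_Cmul_liftz hornerZ horner_comp hornerXsubC -rmorphB Ediv_root.
- by rewrite (mulr0 (iA _)) polyC0 mulr0.
- by rewrite size_sub_leq // -mem_Adeg.
- by rewrite subr_eq0 eq_sym.
Qed.

Lemma rhs_eval d (a0 : {poly F}) : (size a0 <= d)%N ->
  (\sum_(j < d) (bpoly F j)%:P * liftz (Ecarlitz F j)).[(iA a0)%:P] = chi_t a0.
Proof.
move=> size_a0; rewrite -(interp_chi size_a0) horner_sum.
by apply: eq_bigr => j _; rewrite horner_Cmul_liftz.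
Qed.
End CarlitzPolynomials.

(* Both sides have degree < q^d in z and agree at the q^d points z = a of A(d). *)
Theorem corollary2p6 (F : finFieldType) (d : nat) (hd : (0 < d)%N) :
  \sum_(a <- Adeg F d)
      (chi_t a)%:P *
      liftz ((iA (ell F d)) *:
               ((Ecarlitz F d \Po ('X - (iA a)%:P)) %/ ('X - (iA a)%:P)))
  = \sum_(j < d) (bpoly F j)%:P * liftz (Ecarlitz F j).
Proof.
under eq_bigr do rewrite comp_Ecarlitz_divp.
apply: (poly_eq_on_points (s := [seq (iA a)%:P | a <- Adeg F d])).
- rewrite map_inj_uniq; first exact: uniq_Adeg.
  by move=> a b /polyC_inj; apply: iA_inj.
- rewrite size_map size_Adeg; apply: size_sub_leq; apply: size_sum_leq => i _;
    apply: leq_trans (size_Cmul_liftz _ _) _.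
    by rewrite (leq_trans (size_scale_leq _ _)) // size_comp_poly2 ?size_XsubC ?size_Ediv.
  by rewrite size_Ecarlitz ltn_exp2l ?q_gt1.
move=> _ /mapP[a0 a0_in ->]; rewrite mem_Adeg in a0_in.
by rewrite lhs_eval ?rhs_eval.
Qed.
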